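(* Let $\alpha=2\sqrt7-4$ and fix $\varepsilon>0$. For every balanced tetrahedral erasure channel $W$ with $Q(W)\le\alpha-\varepsilon$, there exists an integer $m>0$ such that for all $n\ge m$, every $n$th-generation descendant $W'$ of $W$ satisfies $Q(W')\ge Q(W)(1+\varepsilon/8)$ (i.e. $Q(W_n)\ge Q(W)(1+\varepsilon/8)$ for all $n\ge m$).
   Context: $\mathrm{TEC}(p,q,r,s,t)$ denotes a tetrahedral erasure channel with parameters $p,q,r,s,t\ge0$ summing to $1$. Its entropy is $H=\frac{q+r+s}{2}+t$, its edge mass is $E=q+r+s$, and its Quetelet index is $Q=E/(H(1-H))$ (defined when $0<H<1$). It is balanced if $q=r=s$. For $W=\mathrm{TEC}(p,q,r,s,t)$, the serial child is $W^{s}=\mathrm{TEC}(p^2,\ ps+sq+qp,\ pq+qr+rp,\ pr+rs+sp,\ 1-\text{(sum of the other four)})$ and the parallel child is $W^{p}=\mathrm{TEC}(1-\text{(sum of the other four)},\ ts+sq+qt,\ tq+qr+rt,\ tr+rs+st,\ t^2)$. The $0$th-generation descendant of $W$ is $W$; the $n$th-generation descendants are the children of the $(n-1)$th-generation descendants; $W_n$ denotes a random $n$th-generation descendant (each step choosing a child with probability $1/2$). *)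

From Stdlib Require Import Reals.
Open Scope R_scope.

Record tec := TEC { tp : R; tq : R; tr : R; ts : R; tt : R }.

Definition valid_tec (W : tec) : Prop :=
  0 <= tp W /\ 0 <= tq W /\ 0 <= tr W /\ 0 <= ts W /\ 0 <= tt W /\
  tp W + tq W + tr W + ts W + tt W = 1.

Definition entropy (W : tec) : R := (tq W + tr W + ts W) / 2 + tt W.
Definition edge_mass (W : tec) : R := tq W + tr W + ts W.
(* Quetelet index; only meaningful when 0 < entropy W < 1. *)
Definition quetelet (W : tec) : R :=
  edge_mass W / (entropy W * (1 - entropy W)).

Definition balanced (W : tec) : Prop := tq W = tr W /\ tr W = ts W.

Definition serial_child (W : tec) : tec :=
  let p := tp W in let q := tq W in let r := tr W in let s := ts W in
  let p' := p * p in
  let q' := p * s + s * q + q * p in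
  let r' := p * q + q * r + r * p in
  let s' := p * r + r * s + s * p in
  TEC p' q' r' s' (1 - (p' + q' + r' + s')).

Definition parallel_child (W : tec) : tec :=
  let q := tq W in let r := tr W in let s := ts W in let t := tt W in
  let q' := t * s + s * q + q * t in
  let r' := t * q + q * r + r * t in
  let s' := t * r + r * s + s * t in
  let t' := t * t in
  TEC (1 - (q' + r' + s' + t')) q' r' s' t'.

Inductive descendant : nat -> tec -> tec -> Prop :=
| desc0 : forall W, descendant 0 W W
| desc_serial : forall n W V, descendant n W V -> descendant (S n) W (serial_child V)
| desc_parallel : forall n W V, descendant n W V -> descendant (S n) W (parallel_child V).

Definition alpha : R := 2 * sqrt 7 - 4.

From Stdlib Require Import Reals Lra Psatz.
Open Scope R_scope.

(* For a balanced channel with entropy H and edge mass E the serial child has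
   1 - H' = (1-H)^2 - E^2/12 and E' = 2(1-H)E - 2E^2/3, and the parallel child is the
   mirror image of the serial child under H <-> 1 - H.  Writing a for the entropy
   coordinate that a step does not square (H for the serial child, 1 - H for the
   parallel one), a step multiplies Q by at least 1 + 2da/9 while Q <= alpha - d,
   because alpha^2 + 8 alpha = 12 gives 12 - 8Q - Q^2 >= 8d; and a channel with
   Q >= alpha has children with Q >= alpha.  So for T <= alpha, min(T, Q) never
   decreases along descendants.  A step with a >= 1/4 gains the factor
   1 + d/18; a step with a < 1/4 multiplies min(H, 1 - H) by 7/4, so from a channel
   with min(H, 1 - H) >= mu a gain occurs within boundedly many steps, after which
   min(H, 1 - H) >= 2 mu^2 / 3.  Five gains with d = eps/2 give the factor 1 + eps/8. *)

Lemma alpha_quadratic : alpha * alpha + 8 * alpha = 12.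
Proof. unfold alpha. pose proof (sqrt_sqrt 7 ltac:(lra)). nra. Qed.

Lemma alpha_bounds : 1.2915 <= alpha <= 1.2916.
Proof.
  unfold alpha. pose proof (sqrt_sqrt 7 ltac:(lra)). pose proof (sqrt_pos 7).
  split; nra.
Qed.

Lemma above_alpha_u2_coef_nonneg u : 0 <= u <= 2 ->
  0 <= 4 - 8/3*alpha - 2/3*u + 13/36*u*alpha - 1/6*u^2 + 1/9*u^2*alpha + 1/144*u^3*alpha.
Proof.
  intros Hu. pose proof alpha_bounds.
  assert (0 <= u * (alpha - 1.2915)) by (apply Rmult_le_pos; lra).
  assert (0 <= u^2 * (alpha - 1.2915)) by (apply Rmult_le_pos; [apply pow2_ge_0 | lra]).
  assert (0 <= u^3 * alpha) by (apply Rmult_le_pos; [apply pow_le |]; lra).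
  assert (u^2 <= 2 * u) by nra.
  nra.
Qed.

Lemma above_alpha_w_coef_nonneg u w :
  0 <= u <= 2 -> 0 <= w -> u <= alpha + w -> alpha + w - u <= 2 ->
  0 <= 2*alpha + 2*w - 2*u - 2/3*u*w - 1/12*u*w*alpha + 1/3*u^2*alpha + 1/6*u^3
       - 1/9*u^3*alpha + 1/144*u^3*w*alpha - 1/72*u^4*alpha.
Proof.
  intros Hu Hw Huw Hwu. pose proof alpha_bounds.
  set (S := 2 - 2/3*u - alpha/12*u + alpha/144*u^3).
  set (C := alpha/3 + (1/6 - alpha/9)*u - alpha/72*u^2).
  assert (HS : 0.4 <= S).
  { unfold S. assert (0 <= u^3 * alpha) by (apply Rmult_le_pos; [apply pow_le |]; lra).
    assert (u * alpha <= 2 * 1.2916) by nra. nra. }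
  assert (HC : 0.3 <= C).
  { unfold C. assert (u * alpha <= 2 * 1.2916) by nra. assert (u^2 <= 4) by nra.
    assert (u^2 * alpha <= 4 * 1.2916) by nra. nra. }
  replace (2*alpha + 2*w - 2*u - 2/3*u*w - 1/12*u*w*alpha + 1/3*u^2*alpha + 1/6*u^3
       - 1/9*u^3*alpha + 1/144*u^3*w*alpha - 1/72*u^4*alpha)
    with (2 * (alpha - u) + u^2 * C + w * S) by (unfold S, C; field).
  assert (0 <= u^2) by apply pow2_ge_0.
  destruct (Rle_dec u alpha).
  - assert (0 <= u^2 * C) by (apply Rmult_le_pos; lra).
    assert (0 <= w * S) by (apply Rmult_le_pos; lra). lra.
  - assert ((u - alpha) * S <= w * S) by (apply Rmult_le_compat_r; lra).
    nra.
Qed.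

(* With w = Q - alpha the difference is w * A(u, w) + u^2 * B(u) up to a multiple of
   alpha^2 + 8 alpha - 12. *)
Lemma above_alpha_poly u Q :
  0 <= u <= 2 -> alpha <= Q -> u <= Q -> Q - u <= 2 ->
  alpha * (1 - u*u/12) * (Q + (Q - u) + u * (Q - u) * (Q - u) / 12) <= 2 * Q * Q * (1 - u/3).
Proof.
  intros Hu HQ HuQ HQu.
  set (w := Q - alpha).
  assert (HA := above_alpha_w_coef_nonneg u w Hu ltac:(unfold w; lra) ltac:(unfold w; lra)
                  ltac:(unfold w; lra)).
  assert (HB := above_alpha_u2_coef_nonneg u Hu).
  set (A := 2*alpha + 2*w - 2*u - 2/3*u*w - 1/12*u*w*alpha + 1/3*u^2*alpha + 1/6*u^3
       - 1/9*u^3*alpha + 1/144*u^3*w*alpha - 1/72*u^4*alpha) in HA.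
  set (B := 4 - 8/3*alpha - 2/3*u + 13/36*u*alpha - 1/6*u^2 + 1/9*u^2*alpha
       + 1/144*u^3*alpha) in HB.
  set (K := -1/12*u*alpha - 1/6*u*w + 1/3*u^2 - 1/18*u^3 + 1/144*u^3*alpha
       + 1/72*u^3*w - 1/72*u^4).
  assert (0 <= w * A) by (apply Rmult_le_pos; unfold w; lra).
  assert (0 <= u^2 * B) by (apply Rmult_le_pos; [apply pow2_ge_0 | lra]).
  assert (Hid : 2 * Q * Q * (1 - u/3)
                - alpha * (1 - u*u/12) * (Q + (Q - u) + u * (Q - u) * (Q - u) / 12)
                = w * A + u^2 * B + (alpha * alpha + 8 * alpha - 12) * K).
  { replace Q with (alpha + w) by (unfold w; ring). unfold A, B, K. field. }
  rewrite alpha_quadratic in Hid. lra.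
Qed.

Definition next_b (b e : R) : R := b * b - e * e / 12.
Definition next_e (b e : R) : R := 2 * b * e - 2 * e * e / 3.
Definition next_quetelet (b e : R) : R := next_e b e / ((1 - next_b b e) * next_b b e).

Definition feasible (a b e : R) : Prop :=
  0 < a /\ 0 < b /\ a + b = 1 /\ 0 <= e /\ e <= 2 * a /\ e <= 2 * b.

Section BalancedRecursion.

Variables a b e : R.
Hypothesis Hf : feasible a b e.

Lemma next_b_ge_two_thirds : 2 / 3 * (b * b) <= next_b b e.
Proof. destruct Hf as (Ha & Hb & Hab & He & Hea & Heb). unfold next_b. nra. Qed.

Lemma next_b_pos : 0 < next_b b e.
Proof. destruct Hf as (_ & Hb & _). pose proof next_b_ge_two_thirds. nra. Qed.

Lemma next_b_ge : b * b - a * a / 3 <= next_b b e.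
Proof. destruct Hf as (Ha & Hb & Hab & He & Hea & Heb). unfold next_b. nra. Qed.

Lemma one_sub_next_b_ge : a * (1 + b) <= 1 - next_b b e.
Proof. destruct Hf as (Ha & Hb & Hab & He & Hea & Heb). unfold next_b. nra. Qed.

Section FixedQuetelet.

Variable Q : R.
Hypothesis HQ : e = Q * a * b.

Lemma quetelet_bounds : 0 <= Q /\ Q * a <= 2 /\ Q * b <= 2.
Proof.
  destruct Hf as (Ha & Hb & Hab & He & Hea & Heb). subst e.
  assert (HQ0 : 0 <= Q) by (apply (Rmult_le_reg_r (a * b)); nra).
  split; [|split]; nra.
Qed.

Lemma next_quetelet_mul :
  next_quetelet b e * ((1 + b + Q*Q*a*b*b/12) * (1 - Q*Q*a*a/12)) = 2 * Q * (1 - Q*a/3).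
Proof.
  destruct Hf as (Ha & Hb & Hab & He & Hea & Heb).
  destruct quetelet_bounds as (HQ0 & HQa & HQb).
  assert (HDa : 1 <= 1 + b + Q*Q*a*b*b/12) by (assert (0 <= (Q*a) * (Q*b) * b) by nra; nra).
  assert (HDb : 2/3 <= 1 - Q*Q*a*a/12) by nra.
  assert (Ha' : 1 - next_b b e = a * (1 + b + Q*Q*a*b*b/12)).
  { unfold next_b. rewrite HQ. replace a with (1 - b) by lra. field. }
  assert (Hb' : next_b b e = b * b * (1 - Q*Q*a*a/12)) by (unfold next_b; rewrite HQ; field).
  unfold next_quetelet. rewrite Ha', Hb'. unfold next_e. rewrite HQ.
  field. split; [|split; [|split]]; lra.
Qed.

Lemma next_quetelet_gain d : 0 <= d -> Q <= alpha - d -> Q * (1 + 2*d/9*a) <= next_quetelet b e.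
Proof.
  destruct Hf as (Ha & Hb & Hab & He & Hea & Heb).
  intros Hd HQd.
  destruct quetelet_bounds as (HQ0 & HQa & HQb).
  pose proof next_quetelet_mul as Hmul. pose proof alpha_quadratic. pose proof alpha_bounds.
  set (Da := 1 + b + Q*Q*a*b*b/12) in Hmul. set (Db := 1 - Q*Q*a*a/12) in Hmul.
  assert (HDa : 1 <= Da <= 7/3) by (unfold Da; assert (0 <= (Q*a) * (Q*b) * b <= 4) by nra; nra).
  assert (HDb : 2/3 <= Db <= 1) by (unfold Db; nra).
  (* 12 - 8Q - Q^2 = (alpha - Q)(alpha + Q + 8) because alpha^2 + 8 alpha = 12 *)
  assert (H12 : 8 * d <= 12 - 8*Q - Q*Q) by nra.
  assert (Hslack : 2 * (1 - Q*a/3) - Da * Db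
     = a * ((12 - 8*Q - Q*Q)/12 + Q*Q*a*(4 - 2*a)/12 + (Q*Q*a*b) * (Q*Q*a*b) / 144)).
  { unfold Da, Db. replace b with (1 - a) by lra. field. }
  assert (0 <= Q*Q*a*(4 - 2*a)) by (assert (0 <= Q*Q*a) by nra; nra).
  assert (0 <= (Q*Q*a*b) * (Q*Q*a*b)) by nra.
  assert (Hgain : (1 + 2*d/9*a) * (Da * Db) <= 2 * (1 - Q*a/3)).
  { assert (2*d/9*a * (Da * Db) <= 2*d/9*a * 3) by (apply Rmult_le_compat_l; nra).
    assert (a * (2*d/3) <= a * ((12 - 8*Q - Q*Q)/12 + Q*Q*a*(4 - 2*a)/12
                                + (Q*Q*a*b) * (Q*Q*a*b) / 144)) by (apply Rmult_le_compat_l; lra).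
    lra. }
  apply (Rmult_le_reg_r (Da * Db)); [nra|].
  rewrite Hmul, Rmult_assoc. replace (2 * Q * (1 - Q*a/3)) with (Q * (2 * (1 - Q*a/3))) by ring.
  apply Rmult_le_compat_l; lra.
Qed.

Lemma next_quetelet_ge_alpha : alpha <= Q -> alpha <= next_quetelet b e.
Proof.
  destruct Hf as (Ha & Hb & Hab & He & Hea & Heb).
  intros HQalpha.
  destruct quetelet_bounds as (HQ0 & HQa & HQb).
  pose proof next_quetelet_mul as Hmul. pose proof alpha_bounds.
  set (Da := 1 + b + Q*Q*a*b*b/12) in Hmul. set (Db := 1 - Q*Q*a*a/12) in Hmul.
  assert (HDa : 1 <= Da) by (unfold Da; assert (0 <= (Q*a) * (Q*b) * b) by nra; nra).
  assert (HDb : 2/3 <= Db) by (unfold Db; nra).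
  assert (Hpoly := above_alpha_poly (Q*a) Q ltac:(nra) HQalpha ltac:(nra) ltac:(nra)).
  assert (Hscaled : alpha * (Da * Db) * Q <= 2 * Q * (1 - Q*a/3) * Q).
  { replace (alpha * (Da * Db) * Q)
      with (alpha * (1 - Q*a*(Q*a)/12) * (Q + (Q - Q*a) + Q*a*(Q - Q*a)*(Q - Q*a)/12))
      by (unfold Da, Db; replace b with (1 - a) by lra; field).
    lra. }
  apply (Rmult_le_reg_r (Da * Db)); [nra|].
  rewrite Hmul. apply (Rmult_le_reg_r Q); lra.
Qed.

End FixedQuetelet.

Lemma next_quetelet_ge_min T : T <= alpha -> Rmin T (e / (a*b)) <= next_quetelet b e.
Proof.
  destruct Hf as (Ha & Hb & Hab & He & Hea & Heb).
  intros HT.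
  assert (HQ : e = e / (a*b) * a * b) by (field; lra).
  destruct (Rle_dec alpha (e / (a*b))) as [Hge | Hlt].
  - pose proof (next_quetelet_ge_alpha _ HQ Hge). pose proof (Rmin_l T (e / (a*b))). lra.
  - pose proof (next_quetelet_gain _ HQ 0 ltac:(lra) ltac:(lra)).
    pose proof (Rmin_r T (e / (a*b))). lra.
Qed.

Lemma next_quetelet_ge_min_gain T d : 0 <= d -> T + d <= alpha -> 1/4 <= a ->
  Rmin T ((1 + d/18) * (e / (a*b))) <= next_quetelet b e.
Proof.
  destruct Hf as (Ha & Hb & Hab & He & Hea & Heb).
  intros Hd HTd Ha4.
  assert (HQ : e = e / (a*b) * a * b) by (field; lra).
  destruct (quetelet_bounds _ HQ) as [HQ0 _].
  set (Q := e / (a*b)) in *.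
  pose proof (Rmin_l T ((1 + d/18) * Q)). pose proof (Rmin_r T ((1 + d/18) * Q)).
  destruct (Rle_dec T Q) as [HTQ | HQT].
  - pose proof (next_quetelet_ge_min T ltac:(lra)) as Hmin.
    fold Q in Hmin. rewrite Rmin_left in Hmin by lra. lra.
  - pose proof (next_quetelet_gain _ HQ d Hd ltac:(lra)).
    assert (Q * (d/18) <= Q * (2*d/9*a)) by (apply Rmult_le_compat_l; nra).
    lra.
Qed.

End BalancedRecursion.

Definition admissible (W : tec) : Prop := valid_tec W /\ balanced W /\ 0 < entropy W < 1.

Definition margin (W : tec) : R := Rmin (entropy W) (1 - entropy W).

Definition mirror (W : tec) : tec := TEC (tt W) (tq W) (tr W) (ts W) (tp W).

Lemma edge_mass_bounds W : valid_tec W -> balanced W ->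
  0 <= edge_mass W /\ edge_mass W <= 2 * entropy W /\ edge_mass W <= 2 * (1 - entropy W).
Proof.
  destruct W as [p q r s t]. unfold valid_tec, balanced, entropy, edge_mass; simpl.
  intros (Hp & Hq & Hr & Hs & Ht & Hsum) [-> ->]. lra.
Qed.

Lemma quetelet_nonneg W : admissible W -> 0 <= quetelet W.
Proof.
  intros (Hv & Hb & HH). destruct (edge_mass_bounds W Hv Hb) as [He _].
  unfold quetelet. apply Rmult_le_pos; [lra|]. apply Rlt_le, Rinv_0_lt_compat. nra.
Qed.

Lemma margin_pos W : admissible W -> 0 < margin W.
Proof. intros (_ & _ & HH). unfold margin. apply Rmin_glb_lt; lra. Qed.

Lemma valid_serial_child W : valid_tec W -> balanced W -> valid_tec (serial_child W).
Proof.
  destruct W as [p q r s t]. unfold valid_tec, balanced, serial_child; simpl.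
  intros (Hp & Hq & Hr & Hs & Ht & Hsum) [-> ->].
  assert (t = 1 - p - 3*s) by lra. subst t.
  split; [nra|]. split; [nra|]. split; [nra|]. split; [nra|]. split; [|ring].
  replace (1 - (p*p + (p*s + s*s + s*p) + (p*s + s*s + s*p) + (p*s + s*s + s*p)))
    with (6*s*s + (1-p-3*s)*(1-p-3*s) + 2*p*(1-p-3*s) + 6*s*(1-p-3*s)) by ring.
  nra.
Qed.

Lemma balanced_serial_child W : balanced W -> balanced (serial_child W).
Proof.
  destruct W as [p q r s t]. unfold balanced, serial_child; simpl.
  intros [-> ->]. split; ring.
Qed.

Lemma serial_child_entropy W : valid_tec W -> balanced W ->
  1 - entropy (serial_child W) = next_b (1 - entropy W) (edge_mass W).
Proof.
  destruct W as [p q r s t]. unfold valid_tec, balanced, entropy, edge_mass, serial_child, next_b; simpl.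
  intros (_ & _ & _ & _ & _ & Hsum) [-> ->].
  replace t with (1 - p - 3*s) by lra. field.
Qed.

Lemma serial_child_edge_mass W : valid_tec W -> balanced W ->
  edge_mass (serial_child W) = next_e (1 - entropy W) (edge_mass W).
Proof.
  destruct W as [p q r s t]. unfold valid_tec, balanced, entropy, edge_mass, serial_child, next_e; simpl.
  intros (_ & _ & _ & _ & _ & Hsum) [-> ->].
  replace t with (1 - p - 3*s) by lra. field.
Qed.

Lemma quetelet_serial_child W : valid_tec W -> balanced W ->
  quetelet (serial_child W) = next_quetelet (1 - entropy W) (edge_mass W).
Proof.
  intros Hv Hb. unfold quetelet, next_quetelet.
  rewrite serial_child_edge_mass, <- serial_child_entropy by assumption.
  f_equal. ring.
Qed.

Lemma admissible_feasible W : admissible W -> feasible (entropy W) (1 - entropy W) (edge_mass W).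
Proof.
  intros (Hv & Hb & HH). destruct (edge_mass_bounds W Hv Hb) as (He & HeH & HeH').
  repeat split; lra.
Qed.

Lemma admissible_serial_child W : admissible W -> admissible (serial_child W).
Proof.
  intros HW. pose proof (admissible_feasible W HW) as Hf. destruct HW as (Hv & Hb & HH).
  split; [exact (valid_serial_child W Hv Hb)|]. split; [exact (balanced_serial_child W Hb)|].
  pose proof (serial_child_entropy W Hv Hb).
  pose proof (next_b_pos _ _ _ Hf). pose proof (one_sub_next_b_ge _ _ _ Hf).
  nra.
Qed.

Lemma quetelet_serial_child_ge_min T W : T <= alpha -> admissible W ->
  Rmin T (quetelet W) <= quetelet (serial_child W).
Proof.
  intros HT HW. pose proof (admissible_feasible W HW) as Hf. destruct HW as (Hv & Hb & _).
  rewrite quetelet_serial_child by assumption. exact (next_quetelet_ge_min _ _ _ Hf T HT).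
Qed.

Lemma serial_child_progress T d W : 0 <= d -> T + d <= alpha -> admissible W ->
  (Rmin T ((1 + d/18) * quetelet W) <= quetelet (serial_child W) /\
   2/3 * margin W ^ 2 <= margin (serial_child W)) \/
  (margin W < 1/4 /\ Rmin (7/4 * margin W) (1/4) <= margin (serial_child W)).
Proof.
  intros Hd HTd HW. pose proof (admissible_feasible W HW) as Hf.
  destruct HW as (Hv & Hb & HH).
  pose proof (next_b_ge_two_thirds _ _ _ Hf). pose proof (next_b_ge _ _ _ Hf).
  pose proof (one_sub_next_b_ge _ _ _ Hf).
  assert (Hmargin : margin (serial_child W)
                    = Rmin (1 - next_b (1 - entropy W) (edge_mass W))
                           (next_b (1 - entropy W) (edge_mass W))).
  { unfold margin. rewrite <- serial_child_entropy by assumption. f_equal. ring. }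
  rewrite Hmargin. unfold margin.
  destruct (Rle_dec (1/4) (entropy W)) as [Hbig | Hsmall].
  - left. split.
    + rewrite quetelet_serial_child by assumption.
      exact (next_quetelet_ge_min_gain _ _ _ Hf T d Hd HTd Hbig).
    + pose proof (Rmin_l (entropy W) (1 - entropy W)). pose proof (Rmin_r (entropy W) (1 - entropy W)).
      set (m := Rmin (entropy W) (1 - entropy W)) in *.
      assert (0 < m) by (apply Rmin_glb_lt; lra).
      assert (m ^ 2 <= m) by nra. assert (m ^ 2 <= (1 - entropy W) * (1 - entropy W)) by nra.
      apply Rmin_glb; nra.
  - right. rewrite Rmin_left by lra. split; [lra|].
    pose proof (Rmin_l (7/4 * entropy W) (1/4)). pose proof (Rmin_r (7/4 * entropy W) (1/4)).
    apply Rmin_glb; nra.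
Qed.

Lemma parallel_child_mirror W : parallel_child W = mirror (serial_child (mirror W)).
Proof. destruct W as [p q r s t]. unfold parallel_child, serial_child, mirror; simpl. f_equal. ring. Qed.

Lemma valid_mirror W : valid_tec W -> valid_tec (mirror W).
Proof. destruct W as [p q r s t]. unfold valid_tec, mirror; simpl. lra. Qed.

Lemma entropy_mirror W : valid_tec W -> entropy (mirror W) = 1 - entropy W.
Proof. destruct W as [p q r s t]. unfold valid_tec, entropy, mirror; simpl. lra. Qed.

Lemma quetelet_mirror W : valid_tec W -> quetelet (mirror W) = quetelet W.
Proof.
  intros Hv. unfold quetelet. rewrite entropy_mirror by exact Hv.
  f_equal. ring.
Qed.

Lemma margin_mirror W : valid_tec W -> margin (mirror W) = margin W.
Proof.
  intros Hv. unfold margin. rewrite entropy_mirror by exact Hv.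
  rewrite Rmin_comm. f_equal. ring.
Qed.

Lemma admissible_mirror W : admissible W -> admissible (mirror W).
Proof.
  intros (Hv & Hb & HH). split; [exact (valid_mirror W Hv)|].
  split; [exact Hb|]. rewrite entropy_mirror by exact Hv. lra.
Qed.

Definition child (V C : tec) : Prop := C = serial_child V \/ C = parallel_child V.

Lemma admissible_child V C : admissible V -> child V C -> admissible C.
Proof.
  intros HV [-> | ->]; [exact (admissible_serial_child V HV)|].
  rewrite parallel_child_mirror.
  exact (admissible_mirror _ (admissible_serial_child _ (admissible_mirror V HV))).
Qed.

Lemma quetelet_child_ge_min T V C : T <= alpha -> admissible V -> child V C ->
  Rmin T (quetelet V) <= quetelet C.
Proof.
  intros HT HV [-> | ->]; [exact (quetelet_serial_child_ge_min T V HT HV)|].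
  pose proof (admissible_mirror V HV) as HV'.
  destruct HV as (Hv & _). destruct (admissible_serial_child _ HV') as (Hv' & _).
  rewrite parallel_child_mirror, quetelet_mirror, <- (quetelet_mirror V) by assumption.
  exact (quetelet_serial_child_ge_min T _ HT HV').
Qed.

Lemma child_progress T d V C : 0 <= d -> T + d <= alpha -> admissible V -> child V C ->
  (Rmin T ((1 + d/18) * quetelet V) <= quetelet C /\ 2/3 * margin V ^ 2 <= margin C) \/
  (margin V < 1/4 /\ Rmin (7/4 * margin V) (1/4) <= margin C).
Proof.
  intros Hd HTd HV [-> | ->]; [exact (serial_child_progress T d V Hd HTd HV)|].
  pose proof (admissible_mirror V HV) as HV'.
  destruct HV as (Hv & _). destruct (admissible_serial_child _ HV') as (Hv' & _).
  rewrite parallel_child_mirror, quetelet_mirror, margin_mirror, <- (quetelet_mirror V),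
    <- (margin_mirror V) by assumption.
  exact (serial_child_progress T d _ Hd HTd HV').
Qed.

Lemma descendant_first_step n V W : descendant (S n) V W ->
  exists C, child V C /\ descendant n C W.
Proof.
  revert W. induction n as [|n IH]; intros W HD.
  - inversion HD as [|? ? U HU|? ? U HU]; subst; inversion HU; subst;
      (eexists; split; [(left + right); reflexivity | constructor]).
  - inversion HD as [|? ? U HU|? ? U HU]; subst;
      destruct (IH _ HU) as (C & HC & HCU); exists C; split; auto; now constructor.
Qed.

Lemma admissible_descendant n V W : admissible V -> descendant n V W -> admissible W.
Proof.
  intros HV HD. induction HD as [|n V U HD IH|n V U HD IH]; [exact HV| |].
  - apply (admissible_child U (serial_child U) (IH HV)). left; reflexivity.
  - apply (admissible_child U (parallel_child U) (IH HV)). right; reflexivity.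
Qed.

Lemma quetelet_descendant_ge_min T n V W : T <= alpha -> admissible V -> descendant n V W ->
  Rmin T (quetelet V) <= quetelet W.
Proof.
  intros HT HV HD. induction HD as [|n V U HD IH|n V U HD IH]; [apply Rmin_r| |].
  all: pose proof (admissible_descendant n V U HV HD) as HU.
  all: eapply Rle_trans; [exact (Rmin_glb _ _ _ (Rmin_l _ _) (IH HV))|].
  - apply (quetelet_child_ge_min T U _ HT HU). left; reflexivity.
  - apply (quetelet_child_ge_min T U _ HT HU). right; reflexivity.
Qed.

Lemma Rmin_scale_trans T r X Y Z : 0 <= T -> 1 <= r ->
  Rmin T Z <= Y -> Rmin T (r * Y) <= X -> Rmin T (r * Z) <= X.
Proof.
  intros HT Hr HZY HYX.
  pose proof (Rmin_l T Z). pose proof (Rmin_r T Z). pose proof (Rmin_l T (r * Z)).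
  pose proof (Rmin_r T (r * Z)).
  destruct (Rle_dec T Y) as [HTY | HYT].
  - rewrite Rmin_left in HYX by nra. lra.
  - assert (Z <= Y) by (unfold Rmin in HZY; destruct (Rle_dec T Z); lra).
    assert (Rmin T (r * Z) <= Rmin T (r * Y)) by (apply Rle_min_compat_l; nra).
    lra.
Qed.

Section Growth.

Variables T d : R.
Hypotheses (HT : 0 <= T) (Hd : 0 <= d) (HTd : T + d <= alpha).

Lemma quetelet_growth_step g mu M : 0 < mu ->
  (forall n V W, (M <= n)%nat -> admissible V -> 2/3 * mu ^ 2 <= margin V -> descendant n V W ->
     Rmin T ((1 + d/18) ^ g * quetelet V) <= quetelet W) ->
  forall j n V W, (j + 1 + M <= n)%nat -> admissible V -> mu <= margin V ->
    1/4 <= (7/4) ^ j * margin V -> descendant n V W ->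
    Rmin T ((1 + d/18) ^ S g * quetelet V) <= quetelet W.
Proof.
  intros Hmu IHg.
  assert (Hrho : forall k, 1 <= (1 + d/18) ^ k) by (intro k; apply pow_R1_Rle; lra).
  assert (after_gain : forall n V C W, (M <= n)%nat -> mu <= margin V ->
            Rmin T ((1 + d/18) * quetelet V) <= quetelet C -> 2/3 * margin V ^ 2 <= margin C ->
            admissible C -> descendant n C W ->
            Rmin T ((1 + d/18) ^ S g * quetelet V) <= quetelet W).
  { intros n V C W Hn HmuV HQ Hm HC HD.
    replace ((1 + d/18) ^ S g * quetelet V) with ((1 + d/18) ^ g * ((1 + d/18) * quetelet V))
      by (simpl; ring).
    apply (Rmin_scale_trans _ _ _ (quetelet C)); [exact HT|apply Hrho|exact HQ|].
    apply (IHg n C W Hn HC); [|exact HD].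
    assert (mu ^ 2 <= margin V ^ 2) by (apply pow_incr; lra). lra. }
  (* j bounds the number of further steps without gain: each of them multiplies the
     margin by 7/4 until it reaches 1/4. *)
  induction j as [|j IHj]; intros n V W Hn HV HmuV Hj HD;
    (destruct n as [|n]; [lia|]);
    destruct (descendant_first_step n V W HD) as (C & HVC & HCW);
    pose proof (admissible_child V C HV HVC) as HC;
    (destruct (child_progress T d V C Hd HTd HV HVC) as [[HQ Hm] | [Hsmall Hm]];
      [exact (after_gain n V C W ltac:(lia) HmuV HQ Hm HC HCW)|]).
  - simpl in Hj. lra.
  - assert (Hspread : 7/4 * margin V <= margin C \/ 1/4 <= margin C).
    { unfold Rmin in Hm. destruct (Rle_dec (7/4 * margin V) (1/4)); [left|right]; lra. }
    pose proof (pow_R1_Rle (7/4) j ltac:(lra)).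
    simpl in Hj.
    apply (Rmin_scale_trans _ _ _ (quetelet C)); [exact HT|apply Hrho| |].
    + apply (quetelet_child_ge_min T V C); [lra|exact HV|exact HVC].
    + apply (IHj n C W ltac:(lia) HC); [| |exact HCW]; destruct Hspread as [Hgrow | Hquarter].
      * lra.
      * lra.
      * assert ((7/4) ^ j * (7/4 * margin V) <= (7/4) ^ j * margin C)
          by (apply Rmult_le_compat_l; lra).
        lra.
      * nra.
Qed.

Lemma quetelet_growth g : forall mu, 0 < mu -> exists M, forall n V W, (M <= n)%nat ->
  admissible V -> mu <= margin V -> descendant n V W ->
  Rmin T ((1 + d/18) ^ g * quetelet V) <= quetelet W.
Proof.
  induction g as [|g IHg]; intros mu Hmu.
  - exists 0%nat. intros n V W _ HV _ HD. rewrite pow_O, Rmult_1_l.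
    exact (quetelet_descendant_ge_min T n V W ltac:(lra) HV HD).
  - destruct (IHg (2/3 * mu ^ 2) ltac:(nra)) as (M & HM).
    destruct (Pow_x_infinity (7/4) ltac:(rewrite Rabs_pos_eq; lra) (1 / (4 * mu))) as (K & HK).
    specialize (HK K (le_n K)). rewrite Rabs_pos_eq in HK by (apply pow_le; lra).
    exists (K + 1 + M)%nat. intros n V W Hn HV HmuV HD.
    apply (quetelet_growth_step g mu M Hmu HM K n V W Hn HV HmuV); [|exact HD].
    assert (1 / (4 * mu) * mu = 1/4) by (field; lra).
    assert ((7/4) ^ K * mu <= (7/4) ^ K * margin V) by (apply Rmult_le_compat_l; [apply pow_le|]; lra).
    nra.
Qed.

End Growth.

Theorem mainTheorem7 (eps : R) (heps : 0 < eps) (W : tec)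
  (hW : valid_tec W) (hbal : balanced W)
  (hH : 0 < entropy W < 1)
  (hQ : quetelet W <= alpha - eps) :
  exists m : nat, (0 < m)%nat /\
    forall (n : nat) (W' : tec), (m <= n)%nat -> descendant n W W' ->
      0 < entropy W' < 1 /\ quetelet W' >= quetelet W * (1 + eps / 8).
Proof.
  assert (HW : admissible W) by (split; [|split]; assumption).
  pose proof (quetelet_nonneg W HW) as HQ0. pose proof alpha_bounds.
  set (T := quetelet W * (1 + eps / 8)).
  assert (HTd : T + eps / 2 <= alpha) by (unfold T; nra).
  destruct (quetelet_growth T (eps / 2) ltac:(unfold T; nra) ltac:(lra) HTd 5 (margin W)
              (margin_pos W HW)) as (M & HM).
  exists (S M). split; [lia|]. intros n W' Hn HD.
  destruct (admissible_descendant n W W' HW HD) as (_ & _ & HH').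
  split; [exact HH'|].
  pose proof (HM n W W' ltac:(lia) HW (Rle_refl _) HD) as Hgrowth.
  (* Bernoulli: (1 + eps/36)^5 >= 1 + 5 eps/36 >= 1 + eps/8. *)
  pose proof (poly 5 (eps / 2 / 18) ltac:(lra)) as Hbernoulli. simpl INR in Hbernoulli.
  assert (T <= (1 + eps / 2 / 18) ^ 5 * quetelet W).
  { unfold T. rewrite (Rmult_comm _ (quetelet W)). apply Rmult_le_compat_l; lra. }
  rewrite Rmin_left in Hgrowth by assumption. apply Rle_ge, Hgrowth.
Qed.
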